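(* Consider the following finite dynamic game. There is a finite set of players $\mathcal{I}$ and times $t\in\{1,\dots,T\}$. Each player $i$ has a local state $X_t^i$ (in a finite set $\mathcal{X}_t^i$), $X_t=(X_t^i)_i$, and a local noise process $W_t^i$; players have no initial information. At each time every player $i$ chooses $U_t^i$ (finite set), $U_t=(U_t^i)_i$, and $(X_{t+1}^i,Y_t^i)=f_t^i(X_t^i,U_t,W_t^i)$ for fixed functions $f_t^i$, where $Y_t^i$ is a public observation (finite set), $Y_t=(Y_t^i)_i$. Player $i$'s information at time $t$ is $H_t^i=(Y_{1:t-1},U_{1:t-1},X_{1:t}^i)$, and all of $(X_1^i)_{i}$, $(W_t^i)_{i,t}$ are mutually independent. Then for each player $i$ and time $t$ there exist functions $\xi_t^{g^i}$, depending on the strategy profile only through $g^i$, mapping $(y_{1:t-1},u_{1:t-1})$ to a distribution on $\mathcal{X}_1^i\times\cdots\times\mathcal{X}_t^i$, such that $$\Pr^g(x_{1:t}\mid y_{1:t-1},u_{1:t-1})=\prod_{i\in\mathcal{I}}\xi_t^{g^i}(x_{1:t}^i\mid y_{1:t-1},u_{1:t-1})$$ for all behavioral strategy profiles $g$ and all $(y_{1:t-1},u_{1:t-1})$ with positive probability under $g$.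
   Context: A behavioral strategy $g^i=(g_t^i)_t$ of player $i$ maps each realization of $H_t^i$ to a probability distribution over player $i$'s actions at time $t$; $\Pr^g$ denotes probability under the profile $g=(g^i)_{i\in\mathcal{I}}$. *)

From HB Require Import structures.
From mathcomp Require Import all_boot all_order all_algebra.
Set Implicit Arguments. Unset Strict Implicit. Unset Printing Implicit Defensive.
Import Order.TTheory GRing.Theory Num.Theory.
Local Open Scope ring_scope.

(* Time is 0-based: index s here corresponds to time s+1 in the paper. *)

Lemma leq_ord_S n (s : 'I_n) : (s.+1 <= n.+1)%N.
Proof. by rewrite ltnS ltnW. Qed.
Lemma ltn_ord_S n (s : 'I_n) : (s.+1 < n.+1)%N.
Proof. by rewrite ltnS. Qed.
Lemma leq_ord n (s : 'I_n) : (s <= n)%N.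
Proof. exact: ltnW. Qed.

Section Game.
Variable R : realFieldType.
Variable I : finType.
Variables X U Y W : I -> nat -> finType.

Definition is_distr (A : finType) (p : A -> R) :=
  (forall a, 0 <= p a) /\ \sum_a p a = 1.

Definition XS (i : I) (n : nat) := {dffun forall k : 'I_n, X i k}.
Definition PU (n : nat) := {dffun forall k : 'I_n, {dffun forall j : I, U j k}}.
Definition PY (n : nat) := {dffun forall k : 'I_n, {dffun forall j : I, Y j k}}.

Definition restrX (i : I) m n (le : (n <= m)%N) (x : XS i m) : XS i n :=
  [ffun k : 'I_n => x (widen_ord le k)].
Definition restrU m n (le : (n <= m)%N) (u : PU m) : PU n :=
  [ffun k : 'I_n => u (widen_ord le k)].
Definition restrY m n (le : (n <= m)%N) (y : PY m) : PY n :=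
  [ffun k : 'I_n => y (widen_ord le k)].

(* behavioral strategy of player i: at time s, given
   H_s^i = (y_{0:s-1}, u_{0:s-1}, x^i_{0:s}), a weight on each action *)
Definition Strat (i : I) :=
  forall s : nat, PY s -> PU s -> XS i s.+1 -> U i s -> R.

Definition is_strat (T : nat) (i : I) (gi : Strat i) :=
  forall s : nat, (s < T)%N ->
    forall py pu xs, is_distr (gi s py pu xs).

Section Dynamics.
Variable f : forall (i : I) (s : nat),
    X i s -> {dffun forall j : I, U j s} -> W i s -> (X i s.+1 * Y i s)%type.
Variable PX1 : forall i : I, X i 0%N -> R.
Variable PW : forall (i : I) (s : nat), W i s -> R.

(* transition kernel induced by the local noise:
   Pr(X_{s+1}^i = x', Y_s^i = y' | X_s^i = xs, U_s = us) *)
Definition PK (i : I) (s : nat) (xs : X i s) (us : {dffun forall j : I, U j s})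
    (x' : X i s.+1) (y' : Y i s) : R :=
  \sum_(w : W i s | f xs us w == (x', y')) PW w.

(* Pr^g(x_{0:t}, y_{0:t-1}, u_{0:t-1}), with X_1^i, W_s^i mutually independent
   and actions drawn according to the behavioral strategies *)
Definition joint (g : forall i, Strat i) (t : nat)
    (x : {dffun forall i : I, XS i t.+1}) (py : PY t) (pu : PU t) : R :=
  (\prod_(i : I) PX1 (x i ord0)) *
  \prod_(s < t)
    ((\prod_(i : I) g i s (restrY (leq_ord s) py) (restrU (leq_ord s) pu)
                      (restrX (leq_ord_S s) (x i)) (pu s i)) *
     (\prod_(i : I) PK (x i (widen_ord (leqnSn t) s)) (pu s)
                      (x i (@Ordinal t.+1 s.+1 (ltn_ord_S s))) (py s i))).

Definition pubprob (g : forall i, Strat i) (t : nat) (py : PY t) (pu : PU t) : R :=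
  \sum_(x : {dffun forall i : I, XS i t.+1}) joint g x py pu.

Definition condprob (g : forall i, Strat i) (t : nat)
    (x : {dffun forall i : I, XS i t.+1}) (py : PY t) (pu : PU t) : R :=
  joint g x py pu / pubprob g py pu.

End Dynamics.
End Game.

(* Every factor of Pr^g(x_{1:t}, y_{1:t-1}, u_{1:t-1}) involves a single
   player: the initial state and the noise are independent across players, the
   transition of X^i and Y^i only reads X^i and the public actions, and g^i only
   reads H^i.  Hence the joint probability is a product over players of terms
   depending on (x^i_{1:t}, y_{1:t-1}, u_{1:t-1}) and g^i only; summing over
   x_{1:t} turns Pr^g(y_{1:t-1}, u_{1:t-1}) into the product of the sums of
   those terms, and xi_t^{g^i} is player i's term normalized by its sum. *)

From Pilot Require Import Defs.
From HB Require Import structures.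
From mathcomp Require Import all_boot all_order all_algebra.
Import Order.TTheory GRing.Theory Num.Theory.
Local Open Scope ring_scope.

Lemma prod_sum_dffun (R : comPzSemiRingType) (I : finType) (T_ : I -> finType)
    (F : forall i, T_ i -> R) :
  \prod_i \sum_(j : T_ i) F i j = \sum_(x : {dffun forall i, T_ i}) \prod_i F i (x i).
Proof.
pose P_ i := [ffun j : T_ i => F i j].
transitivity (\prod_i \sum_(j : T_ i) P_ i j).
  by apply: eq_bigr => i _; apply: eq_bigr => j _; rewrite ffunE.
under eq_bigr do rewrite (big_tag (fun i => P_ i)).
rewrite bigA_distr_big_dep -(@big_fprod _ _ _ _ _ _ _ P_).
rewrite (reindex (@fprod_of_dffun I T_)); last exact/onW_bij/fprod_of_dffun_bij.
apply: eq_bigr => x _; apply: eq_bigr => i _.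
by rewrite /P_ ffunE /fprod_of_dffun fprodE.
Qed.

Section Normalize.
Context {R : realFieldType} {A : finType}.

Lemma distr_card_gt0 {p : A -> R} : is_distr p -> (0 < #|A|)%N.
Proof.
move=> [_ sum_p1]; rewrite lt0n; apply/eqP => /card0_eq A0.
move: sum_p1; rewrite big_pred0 => [/eqP|a]; first by rewrite eq_sym oner_eq0.
by have := A0 a; rewrite !inE.
Qed.

Definition normalizable (p : A -> R) := [forall b, 0 <= p b] && (\sum_b p b != 0).

(* The uniform fallback is needed because xi_t^{g^i} must be a distribution
   even when g^i is not a strategy or the history has probability zero. *)
Definition normalize (p : A -> R) (a : A) : R :=
  if normalizable p then p a / \sum_b p b else #|A|%:R^-1.

Lemma normalize_distr (p : A -> R) : (0 < #|A|)%N -> is_distr (normalize p).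
Proof.
move=> A_gt0; rewrite /normalize.
case: (boolP (normalizable p)) => [/andP[/forallP p_ge0 sum_p_neq0]|_].
  by split=> [a|]; [rewrite divr_ge0 ?sumr_ge0 | rewrite -mulr_suml divff].
split=> [a|]; first by rewrite invr_ge0 ler0n.
by rewrite sumr_const -(mulr_natr #|A|%:R^-1 #|A|) mulVf // pnatr_eq0 -lt0n.
Qed.

Lemma normalizeE (p : A -> R) (a : A) :
  (forall b, 0 <= p b) -> \sum_b p b != 0 -> normalize p a = p a / \sum_b p b.
Proof.
move=> p_ge0 sum_p_neq0.
by rewrite /normalize /normalizable sum_p_neq0 (introT forallP p_ge0).
Qed.

End Normalize.

Section LocalFactor.
Context {R : realFieldType} {I : finType} {X U Y W : I -> nat -> finType}.
Variable f : forall (i : I) (s : nat),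
  X i s -> {dffun forall j : I, U j s} -> W i s -> (X i s.+1 * Y i s)%type.
Variable PX1 : forall i : I, X i 0%N -> R.
Variable PW : forall (i : I) (s : nat), W i s -> R.
Context {t : nat}.

Definition local_joint {i : I} (gi : Strat R X U Y i) (py : PY Y t) (pu : PU U t)
    (xi : XS X i t.+1) : R :=
  PX1 i (xi ord0) *
  \prod_(s < t)
    (gi s (restrY (Defs.leq_ord s) py) (restrU (Defs.leq_ord s) pu)
        (restrX (leq_ord_S s) xi) (pu s i) *
     PK f PW (xi (widen_ord (leqnSn t) s)) (pu s)
        (xi (@Ordinal t.+1 s.+1 (ltn_ord_S s))) (py s i)).

Lemma joint_prod_local g x py pu :
  joint f PX1 PW g x py pu = \prod_i local_joint (g i) py pu (x i).
Proof.
rewrite /joint /local_joint [RHS]big_split /=; congr (_ * _).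
by rewrite [RHS]exchange_big; apply: eq_bigr => s _; rewrite big_split.
Qed.

Lemma pubprob_prod_local g py pu :
  pubprob f PX1 PW g py pu = \prod_i \sum_xi local_joint (g i) py pu xi.
Proof.
by rewrite prod_sum_dffun; apply: eq_bigr => x _; apply: joint_prod_local.
Qed.

Hypothesis PX1_distr : forall i, is_distr (PX1 i).
Hypothesis PW_distr : forall i s, is_distr (PW i s).

Lemma local_joint_ge0 {T : nat} {i : I} {gi : Strat R X U Y i} :
  is_strat T gi -> (t < T)%N -> forall py pu xi, 0 <= local_joint gi py pu xi.
Proof.
move=> gi_strat ltT py pu xi.
rewrite mulr_ge0 ?prodr_ge0 //; first by case: (PX1_distr i).
move=> s _; rewrite mulr_ge0 //.
  by case: (gi_strat s (ltn_trans (ltn_ord s) ltT) (restrY (Defs.leq_ord s) py)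
                     (restrU (Defs.leq_ord s) pu) (restrX (leq_ord_S s) xi)).
by rewrite sumr_ge0 // => w _; case: (PW_distr i s).
Qed.

(* For [k > 0] the nonemptiness of [X i k] needs an action profile to feed [f]. *)
Lemma local_state_card_gt0 i (pu : PU U t) k : (k <= t)%N -> (0 < #|X i k|)%N.
Proof.
elim: k => [|k IHk] le_kt; first exact: distr_card_gt0 (PX1_distr i).
have [x _] := card_gt0P (IHk (ltnW le_kt)).
have [w _] := card_gt0P (distr_card_gt0 (PW_distr i k)).
by apply/card_gt0P; exists (f i k x (pu (Ordinal le_kt)) w).1.
Qed.

Lemma local_traj_card_gt0 i (pu : PU U t) : (0 < #|XS X i t.+1|)%N.
Proof.
have inhX (k : 'I_t.+1) : exists x : X i k, x \in X i k.
  by apply/card_gt0P/(local_state_card_gt0 i pu); rewrite -ltnS.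
by apply/card_gt0P; exists [ffun k => xchoose (inhX k)].
Qed.

End LocalFactor.

Theorem lemma12 (R : realFieldType) (I : finType) (T : nat)
  (X U Y W : I -> nat -> finType)
  (f : forall (i : I) (s : nat),
        X i s -> {dffun forall j : I, U j s} -> W i s -> (X i s.+1 * Y i s)%type)
  (PX1 : forall i : I, X i 0%N -> R)
  (PW : forall (i : I) (s : nat), W i s -> R)
  (hX1 : forall i : I, is_distr (PX1 i))
  (hW : forall (i : I) (s : nat), is_distr (PW i s))
  (t : nat) (ht : (t < T)%N) :
  exists Xi : forall i : I, Strat R X U Y i -> PY Y t -> PU U t -> XS X i t.+1 -> R,
    (forall (i : I) (gi : Strat R X U Y i) (py : PY Y t) (pu : PU U t),
        is_distr (Xi i gi py pu)) /\
    (forall g : forall i : I, Strat R X U Y i,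
        (forall i : I, is_strat T (g i)) ->
        forall (py : PY Y t) (pu : PU U t),
          0 < pubprob f PX1 PW g py pu ->
          forall x : {dffun forall i : I, XS X i t.+1},
            condprob f PX1 PW g x py pu = \prod_(i : I) Xi i (g i) py pu (x i)).
Proof.
exists (fun i gi py pu => normalize (local_joint f PX1 PW gi py pu)); split.
  by move=> i gi py pu; apply/normalize_distr/(local_traj_card_gt0 f PX1 PW hX1 hW).
move=> g g_strat py pu pub_gt0 x.
have local_sum_neq0 i : \sum_xi local_joint f PX1 PW (g i) py pu xi != 0.
  by move: pub_gt0; rewrite pubprob_prod_local lt0r => /andP[/prodf_neq0/(_ i isT)].
rewrite /condprob joint_prod_local pubprob_prod_local -prodf_div.
apply: eq_bigr => i _; rewrite normalizeE // => xi.
exact: (local_joint_ge0 f PX1 PW hX1 hW (g_strat i) ht py pu xi).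
Qed.
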